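(* Let $A\subseteq 2^\omega$ be $\mu$-measurable. If $\Phi(A)\neq\emptyset$ and $\Phi(A)$ has empty interior, then $\Phi(A)$ is a complete $\boldsymbol{\Pi}^0_3$ set.
   Context: $2^\omega$ is the Cantor space with the product topology; $N_s=\{x\in 2^\omega: s\subset x\}$ for finite binary $s$. $\mu$ is the coin-tossing measure on $2^\omega$ with $\mu(N_s)=2^{-\mathrm{lh}(s)}$. For measurable $A$, $\Phi(A)=\{x: \lim_{n}\mu(A\cap N_{x\restriction n})/\mu(N_{x\restriction n})=1\}$. $\boldsymbol{\Pi}^0_3$ is the class of $F_{\sigma\delta}$ sets; $X\subseteq 2^\omega$ is complete $\boldsymbol{\Pi}^0_3$ if $X\in\boldsymbol{\Pi}^0_3$ and every $\boldsymbol{\Pi}^0_3$ subset of $2^\omega$ is a continuous preimage $f^{-1}(X)$ with $f:2^\omega\to 2^\omega$ continuous (equivalently $X$ is $F_{\sigma\delta}$ but not $G_{\delta\sigma}$). *)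

From Stdlib Require Import Reals List Arith.
Open Scope R_scope.

Definition Cantor := nat -> bool.
Definition CSet := Cantor -> Prop.

Definition restr (x : Cantor) (n : nat) : list bool := map x (seq 0 n).

Definition cyl (s : list bool) : CSet :=
  fun x => forall i, (i < length s)%nat -> nth i s false = x i.

Definition cyl_weight (s : list bool) : R := (/ 2) ^ (length s).

Definition covers (c : nat -> list bool) (A : CSet) : Prop :=
  forall x, A x -> exists i, cyl (c i) x.

(* mu_outer A = r : r is the infimum, over countable covers of A by basic
   clopen sets, of the total weight sum_i 2^{-lh(c i)} (a supremum of partial sums). *)
Definition outer_measure_is (A : CSet) (r : R) : Prop :=
  (forall c v, covers c A ->
     (forall n, sum_f_R0 (fun i => cyl_weight (c i)) n <= v) -> r <= v) /\
  (forall eps, 0 < eps -> exists c, covers c A /\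
     forall n, sum_f_R0 (fun i => cyl_weight (c i)) n <= r + eps).

Definition inter (A B : CSet) : CSet := fun x => A x /\ B x.
Definition diff (A B : CSet) : CSet := fun x => A x /\ ~ B x.

(* mu-measurable = Caratheodory measurable for the outer measure
   (i.e. in the completion of mu). *)
Definition measurable (A : CSet) : Prop :=
  forall E a b c, outer_measure_is E a -> outer_measure_is (inter E A) b ->
    outer_measure_is (diff E A) c -> a = b + c.

Definition Phi (A : CSet) : CSet := fun x =>
  exists d : nat -> R,
    (forall n, outer_measure_is (inter A (cyl (restr x n))) (d n)) /\
    Un_cv (fun n => d n / cyl_weight (restr x n)) 1.

Definition agree (n : nat) (x y : Cantor) : Prop := forall i, (i < n)%nat -> x i = y i.
Definition is_open (U : CSet) : Prop :=
  forall x, U x -> exists n, forall y, agree n x y -> U y.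
Definition is_closed (C : CSet) : Prop := is_open (fun x => ~ C x).
Definition continuous (f : Cantor -> Cantor) : Prop :=
  forall x n, exists m, forall y, agree m x y -> agree n (f x) (f y).

Definition empty_interior (X : CSet) : Prop :=
  forall U, is_open U -> (forall x, U x -> X x) -> forall x, ~ U x.

Definition Sigma02 (X : CSet) : Prop :=
  exists F : nat -> CSet, (forall k, is_closed (F k)) /\
    forall x, X x <-> exists k, F k x.
Definition Pi03 (X : CSet) : Prop :=
  exists G : nat -> CSet, (forall k, Sigma02 (G k)) /\
    forall x, X x <-> forall k, G k x.

Definition complete_Pi03 (X : CSet) : Prop :=
  Pi03 X /\ forall Y, Pi03 Y ->
    exists f, continuous f /\ forall x, Y x <-> X (f x).

From Stdlib Require Import Reals List Arith.
From Stdlib Require Import Lia Lra Psatz Classical ClassicalEpsilon FinFun PArith.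
Require Stdlib.Arith.Cantor.
Import ListNotations.
Open Scope R_scope.

(* Write dens A s = μ(A ∩ N_s)/μ(N_s) and call 1 - dens A s the deficit of s;
   x ∈ Φ(A) iff the deficits of x|n tend to 0, which is a Π⁰₃ condition.
   For hardness, let Y = ⋂_k ⋃_n F k n with F k n closed.  For each k, x lies in
   ⋃_n F k n iff the least n such that x|j meets F k n changes ("switches")
   only finitely often as j grows.  We build a continuous map x ↦ lim_j stage x j
   where stage x j is a string of deficit < ε_j: at step j, if some k ≤ j
   switches, the string first dips to deficit ≥ η_k and then climbs back to
   deficit < ε_(j+1), all intermediate deficits staying ≤ 4 η_k; otherwise it
   only climbs.  So the deficits along the image tend to 0 iff every k switches
   finitely often, i.e. iff x ∈ Y.  Dipping is possible because no cylinder is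
   contained in Φ(A) (measurability plus a weak Lebesgue density theorem);
   climbing uses the density theorem on the points of A whose deficits stay
   small, together with a measure bound on antichains of strings. *)

(** * Strings and cylinders *)

Definition prefix (s t : list bool) : Prop := exists r, t = s ++ r.

Lemma prefix_refl s : prefix s s.
Proof. exists []. rewrite app_nil_r. reflexivity. Qed.

Lemma prefix_trans a b c : prefix a b -> prefix b c -> prefix a c.
Proof. intros [r1 ->] [r2 ->]. exists (r1 ++ r2). rewrite app_assoc. reflexivity. Qed.

Lemma prefix_app s r : prefix s (s ++ r).
Proof. exists r. reflexivity. Qed.

Lemma prefix_length s t : prefix s t -> (length s <= length t)%nat.
Proof. intros [r ->]. rewrite length_app. lia. Qed.

Lemma prefix_nth s t i : prefix s t -> (i < length s)%nat -> nth i t false = nth i s false.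
Proof. intros [r ->] Hi. apply app_nth1, Hi. Qed.

Lemma prefix_same_length a b c : prefix a c -> prefix b c -> length a = length b -> a = b.
Proof.
  intros [r1 H1] [r2 H2] Hl. rewrite H1 in H2.
  assert (H : firstn (length a) (a ++ r1) = firstn (length a) (b ++ r2))
    by (rewrite H2; reflexivity).
  rewrite !firstn_app, Hl, Nat.sub_diag, !firstn_0, !app_nil_r in H.
  rewrite <- Hl, firstn_all in H. rewrite Hl, firstn_all in H. exact H.
Qed.

Lemma prefix_snoc_inv c s b : prefix c (s ++ [b]) -> ~ prefix c s -> c = s ++ [b].
Proof.
  intros [r Hr] Hn. destruct r as [|x r'] using rev_ind.
  - rewrite app_nil_r in Hr. symmetry. exact Hr.
  - exfalso. apply Hn. rewrite app_assoc in Hr. apply app_inj_tail in Hr.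
    destruct Hr as [Hr _]. exists r'. exact Hr.
Qed.

Lemma prefix_snoc_bit s b1 b2 c : prefix (s ++ [b1]) c -> prefix (s ++ [b2]) c -> b1 = b2.
Proof.
  intros [r1 H1] [r2 H2]. rewrite H1, <- !app_assoc in H2. apply app_inv_head in H2.
  simpl in H2. inversion H2. reflexivity.
Qed.

Lemma prefix_strict s c : prefix s c -> s <> c -> exists b, prefix (s ++ [b]) c.
Proof.
  intros [r ->] Hne. destruct r as [|b r]; [rewrite app_nil_r in Hne; congruence|].
  exists b, r. rewrite <- app_assoc. reflexivity.
Qed.

Lemma firstn_S_snoc (l : list bool) k :
  (k < length l)%nat -> firstn (S k) l = firstn k l ++ [nth k l false].
Proof.
  revert k. induction l as [|a l IH]; intros k Hk; simpl in Hk; [lia|].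
  destruct k; [reflexivity|].
  change (firstn (S (S k)) (a :: l)) with (a :: firstn (S k) l).
  change (nth (S k) (a :: l) false) with (nth k l false).
  rewrite IH by lia. reflexivity.
Qed.

Lemma length_restr x n : length (restr x n) = n.
Proof. unfold restr. rewrite length_map, length_seq. reflexivity. Qed.

Lemma nth_restr x n i : (i < n)%nat -> nth i (restr x n) false = x i.
Proof.
  intro H. unfold restr.
  rewrite nth_indep with (d' := x 0%nat) by (rewrite length_map, length_seq; lia).
  rewrite map_nth, seq_nth by lia. reflexivity.
Qed.

Lemma restr_add x n k : restr x (n + k) = restr x n ++ map x (seq n k).
Proof. unfold restr. rewrite seq_app, map_app. reflexivity. Qed.

Lemma restr_prefix x n m : (n <= m)%nat -> prefix (restr x n) (restr x m).
Proof.
  intro H. exists (map x (seq n (m - n))). rewrite <- restr_add. f_equal. lia.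
Qed.

Lemma agree_restr n x y : agree n x y -> restr x n = restr y n.
Proof.
  intro H. unfold restr. apply map_ext_in. intros a Ha. apply in_seq in Ha. apply H. lia.
Qed.

Lemma restr_agree n x y : restr x n = restr y n -> agree n x y.
Proof.
  intros H i Hi. rewrite <- (nth_restr x n i Hi), <- (nth_restr y n i Hi), H. reflexivity.
Qed.

Lemma agree_le n m x y : (m <= n)%nat -> agree n x y -> agree m x y.
Proof. intros H1 H2 i Hi. apply H2. lia. Qed.

Lemma cyl_restr s x : cyl s x <-> restr x (length s) = s.
Proof.
  split.
  - intro H. apply nth_ext with false false; [apply length_restr|].
    intros i Hi. rewrite length_restr in Hi. rewrite nth_restr by lia.
    symmetry. apply H. exact Hi.
  - intros H i Hi. rewrite <- H. rewrite nth_restr; [reflexivity|].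
    rewrite <- H, length_restr in Hi. exact Hi.
Qed.

Lemma restr_cyl x n : cyl (restr x n) x.
Proof. apply cyl_restr. rewrite length_restr. reflexivity. Qed.

Lemma cyl_prefix s t x : prefix s t -> cyl t x -> cyl s x.
Proof.
  intros [r ->] H i Hi. rewrite <- H by (rewrite length_app; lia).
  rewrite app_nth1 by lia. reflexivity.
Qed.

Lemma cyl_app s r x : cyl (s ++ r) x -> cyl s x.
Proof. apply cyl_prefix, prefix_app. Qed.

Lemma cyl_extend s x : cyl s x -> cyl (s ++ [x (length s)]) x.
Proof.
  intro H. apply cyl_restr in H. apply cyl_restr. rewrite length_app. simpl.
  rewrite restr_add, H. reflexivity.
Qed.

Lemma cyl_comparable s t x : cyl s x -> cyl t x -> (length s <= length t)%nat -> prefix s t.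
Proof.
  intros Hs Ht Hl. apply cyl_restr in Hs. apply cyl_restr in Ht.
  rewrite <- Hs, <- Ht. apply restr_prefix. exact Hl.
Qed.

Lemma cyl_open t : is_open (cyl t).
Proof.
  intros x Hx. exists (length t). intros y Hy i Hi. rewrite Hx by exact Hi. apply Hy, Hi.
Qed.

Lemma restr_in_segment x u r k : cyl (u ++ r) x -> (k <= length r)%nat ->
  restr x (length u + k) = u ++ firstn k r.
Proof.
  intros Hx Hk. apply cyl_restr in Hx. rewrite length_app in Hx.
  apply (prefix_same_length _ _ (u ++ r)).
  - rewrite <- Hx. apply restr_prefix. lia.
  - rewrite <- (firstn_skipn k r) at 2. rewrite app_assoc. apply prefix_app.
  - rewrite length_restr, length_app, length_firstn. lia.
Qed.

Definition chain_limit (g : nat -> list bool) : Cantor := fun i => nth i (g (S i)) false.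

Lemma chain_prefix (g : nat -> list bool) : (forall k, prefix (g k) (g (S k))) ->
  forall k k', (k <= k')%nat -> prefix (g k) (g k').
Proof.
  intros H k k' Hk. induction Hk; [apply prefix_refl|].
  eapply prefix_trans; [exact IHHk| apply H].
Qed.

Lemma chain_limit_cyl (g : nat -> list bool) : (forall k, prefix (g k) (g (S k))) ->
  (forall k, (k <= length (g k))%nat) -> forall k, cyl (g k) (chain_limit g).
Proof.
  intros H1 H2 k i Hi. unfold chain_limit.
  destruct (le_lt_dec (S i) k) as [Hle|Hlt].
  - apply prefix_nth; [apply chain_prefix; [exact H1|exact Hle]|]. specialize (H2 (S i)). lia.
  - symmetry. apply prefix_nth; [|exact Hi]. apply chain_prefix; [exact H1|lia].
Qed.

Lemma least_nat (P : nat -> Prop) :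
  (exists n, P n) -> exists n, P n /\ forall k, (k < n)%nat -> ~ P k.
Proof.
  intros [n Hn]. induction n as [n IH] using lt_wf_ind.
  destruct (classic (exists k, (k < n)%nat /\ P k)) as [[k [Hk1 Hk2]]|Hno].
  - exact (IH k Hk1 Hk2).
  - exists n. split; [exact Hn|]. intros k Hk Pk. apply Hno. exists k. split; assumption.
Qed.

Definition lsum {X : Type} (g : X -> R) (l : list X) : R :=
  fold_right (fun a s => g a + s) 0 l.

Lemma lsum_app {X} (g : X -> R) l1 l2 : lsum g (l1 ++ l2) = lsum g l1 + lsum g l2.
Proof. induction l1; simpl; [lra|]. rewrite IHl1. lra. Qed.

Lemma lsum_map {X Y} (g : Y -> R) (f : X -> Y) l : lsum g (map f l) = lsum (fun x => g (f x)) l.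
Proof. induction l; simpl; [reflexivity|]. rewrite IHl. reflexivity. Qed.

Lemma lsum_nonneg {X} (g : X -> R) l : (forall x, 0 <= g x) -> 0 <= lsum g l.
Proof. intro H. induction l; simpl; [lra|]. specialize (H a). lra. Qed.

Lemma lsum_le {X} (g h : X -> R) l :
  (forall x, In x l -> g x <= h x) -> lsum g l <= lsum h l.
Proof.
  induction l; simpl; intros H; [lra|].
  assert (g a <= h a) by auto. assert (lsum g l <= lsum h l) by auto. lra.
Qed.

Lemma lsum_scal {X} (g : X -> R) c l : lsum (fun x => c * g x) l = c * lsum g l.
Proof. induction l; simpl; [lra|]. rewrite IHl. lra. Qed.

Lemma lsum_plus {X} (g h : X -> R) l : lsum (fun x => g x + h x) l = lsum g l + lsum h l.
Proof. induction l; simpl; [lra|]. rewrite IHl. lra. Qed.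

Lemma lsum_filter {X} (g : X -> R) (f : X -> bool) l :
  lsum g l = lsum g (filter f l) + lsum g (filter (fun x => negb (f x)) l).
Proof. induction l; simpl; [lra|]. destruct (f a); simpl; rewrite IHl; lra. Qed.

Lemma lsum_prod {X Y} (g : X * Y -> R) l1 l2 :
  lsum g (list_prod l1 l2) = lsum (fun a => lsum (fun b => g (a, b)) l2) l1.
Proof. induction l1; simpl; [reflexivity|]. rewrite lsum_app, lsum_map, IHl1. reflexivity. Qed.

Lemma lsum_incl {X} (g : X -> R) (P Q : list X) :
  (forall x, 0 <= g x) -> NoDup P -> (forall x, In x P -> In x Q) -> lsum g P <= lsum g Q.
Proof.
  intros Hg. revert Q. induction P as [|a P IH]; intros Q HN HI; simpl.
  - apply lsum_nonneg, Hg.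
  - inversion HN; subst.
    destruct (in_split a Q) as [Q1 [Q2 ->]]; [apply HI; left; reflexivity|].
    assert (H : lsum g P <= lsum g (Q1 ++ Q2)).
    { apply IH; [assumption|]. intros x Hx.
      assert (Hx' : In x (Q1 ++ a :: Q2)) by (apply HI; right; exact Hx).
      apply in_app_or in Hx'. apply in_or_app.
      destruct Hx' as [Hx'|[Hx'|Hx']]; auto. subst. contradiction. }
    rewrite lsum_app in *. simpl. lra.
Qed.

Lemma lsum_filter_map {X} (f : nat -> X) (P : X -> bool) (g : X -> R) c (l : list nat) :
  lsum (fun i => if P (f i) then c * g (f i) else 0) l = c * lsum g (filter P (map f l)).
Proof. induction l as [|a l IH]; simpl; [lra|]. destruct (P (f a)); simpl; rewrite IH; lra. Qed.

Lemma sum_lsum f n : sum_f_R0 f n = lsum f (seq 0 (S n)).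
Proof.
  induction n; [simpl; lra|].
  change (sum_f_R0 f (S n)) with (sum_f_R0 f n + f (S n)).
  rewrite IHn, (seq_S (S n) 0), lsum_app. simpl. lra.
Qed.

Lemma sum_nonneg f n : (forall i, 0 <= f i) -> 0 <= sum_f_R0 f n.
Proof. intro H. rewrite sum_lsum. apply lsum_nonneg, H. Qed.

Lemma sum_le f g n : (forall i, f i <= g i) -> sum_f_R0 f n <= sum_f_R0 g n.
Proof. intro H. rewrite !sum_lsum. apply lsum_le. auto. Qed.

Lemma sum_mono f n m : (forall i, 0 <= f i) -> (n <= m)%nat -> sum_f_R0 f n <= sum_f_R0 f m.
Proof. intros H Hnm. induction Hnm; [lra|]. simpl. specialize (H (S m)). lra. Qed.

Lemma sum_term f n i : (forall i, 0 <= f i) -> (i <= n)%nat -> f i <= sum_f_R0 f n.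
Proof.
  intros H Hi. apply Rle_trans with (sum_f_R0 f i).
  - destruct i; simpl; [lra|]. pose proof (sum_nonneg f i H). lra.
  - apply sum_mono; assumption.
Qed.

Lemma sum_cons f n : sum_f_R0 f (S n) = f 0%nat + sum_f_R0 (fun i => f (S i)) n.
Proof. induction n; simpl in *; [lra|]. rewrite IHn. lra. Qed.

Lemma geometric_half n : sum_f_R0 (fun i => (/2)^i) n <= 2.
Proof.
  rewrite tech3 by lra. assert (0 <= (/2)^(S n)) by (apply pow_le; lra).
  replace (1 - /2) with (/2) by lra. unfold Rdiv. rewrite Rinv_inv. lra.
Qed.

Lemma geometric_tail K n : sum_f_R0 (fun i => (/2)^(i + K)) n <= 2 * (/2)^K.
Proof.
  assert (E : sum_f_R0 (fun i => (/2)^(i + K)) n = sum_f_R0 (fun i => (/2)^i * (/2)^K) n).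
  { apply sum_eq. intros. apply pow_add. }
  rewrite E, <- scal_sum. pose proof (geometric_half n) as H.
  assert (0 < (/2)^K) by (apply pow_lt; lra).
  rewrite (Rmult_comm 2). apply Rmult_le_compat_l; [lra | exact H].
Qed.

Lemma geometric_tail_small eps : 0 < eps -> exists K, 2 * (/2)^K < eps.
Proof.
  intro H. destruct (pow_lt_1_zero (/2)) with (y := eps / 2) as [K HK].
  - rewrite Rabs_right; lra.
  - lra.
  - exists K. specialize (HK K (le_n K)). rewrite Rabs_right in HK; [lra|].
    apply Rle_ge, pow_le. lra.
Qed.

Lemma le_epsilon_bound a b : (forall eps, 0 < eps -> a <= b + eps) -> a <= b.
Proof.
  intro H. destruct (Rle_or_lt a b); [assumption|]. specialize (H ((a - b)/2)). lra.
Qed.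

Lemma inv_succ_small eps : 0 < eps -> exists K, / (INR K + 1) < eps.
Proof.
  intro H. destruct (archimed_cor1 eps H) as [N [HN1 HN2]]. exists N.
  apply Rle_lt_trans with (/ INR N); [|exact HN1].
  apply Rinv_le_contravar; [apply lt_0_INR; lia| lra].
Qed.

Notation w := cyl_weight.

Lemma w_pos s : 0 < w s.
Proof. unfold cyl_weight. apply pow_lt. lra. Qed.

Lemma w_app s r : w (s ++ r) = w s * w r.
Proof. unfold cyl_weight. rewrite length_app. apply pow_add. Qed.

Lemma w_snoc s b : w (s ++ [b]) = w s / 2.
Proof. unfold cyl_weight. rewrite length_app, pow_add. simpl. lra. Qed.

Lemma w_prefix_le s t : prefix s t -> w t <= w s.
Proof.
  intros [r ->]. rewrite w_app. pose proof (w_pos s).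
  assert (w r <= 1).
  { unfold cyl_weight. induction (length r); simpl; [lra|].
    assert (0 <= (/2)^n) by (apply pow_le; lra). nra. }
  nra.
Qed.

Lemma w_repeat n : w (repeat false n) = (/2)^n.
Proof. unfold cyl_weight. rewrite repeat_length. reflexivity. Qed.

(** * The outer measure *)

(* The infimum defining outer_measure_is exists (completeness of R), and is
   unique; mu S denotes it. *)
Lemma outer_measure_exists S : exists r, outer_measure_is S r.
Proof.
  set (E := fun y => exists c, covers c S /\ forall n, sum_f_R0 (fun i => w (c i)) n <= - y).
  assert (HE : forall y, E y -> y < 0).
  { intros y [c [_ Hc]]. specialize (Hc 0%nat). simpl in Hc. pose proof (w_pos (c 0%nat)). lra. }
  assert (Hb : bound E) by (exists 0; intros y Hy; apply HE in Hy; lra).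
  assert (Hne : exists y, E y).
  { exists (-2), (fun i => repeat false i). split.
    - intros x _. exists 0%nat. intros i Hi. simpl in Hi. lia.
    - intro n. replace (- -2) with 2 by lra. eapply Rle_trans; [|apply (geometric_half n)].
      right. apply sum_eq. intros. apply w_repeat. }
  destruct (completeness E Hb Hne) as [M [HM1 HM2]].
  exists (- M). split.
  - intros c v Hc Hv. assert (H : E (- v)).
    { exists c. split; [assumption|]. intro n. rewrite Ropp_involutive. apply Hv. }
    apply HM1 in H. lra.
  - intros eps Heps. apply NNPP. intro Hno.
    assert (M <= M - eps); [|lra].
    apply HM2. intros y [c [Hc Hs]].
    destruct (Rle_or_lt y (M - eps)) as [|Hlt]; [assumption|].
    exfalso. apply Hno. exists c. split; [assumption|]. intro n. specialize (Hs n). lra.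
Qed.

Lemma outer_measure_unique S r1 r2 : outer_measure_is S r1 -> outer_measure_is S r2 -> r1 = r2.
Proof.
  intros [H1a H1b] [H2a H2b].
  assert (H : forall ra rb,
    (forall c v, covers c S -> (forall n, sum_f_R0 (fun i => w (c i)) n <= v) -> ra <= v) ->
    (forall eps, 0 < eps -> exists c, covers c S /\
       forall n, sum_f_R0 (fun i => w (c i)) n <= rb + eps) -> ra <= rb).
  { intros ra rb Ha Hb. apply le_epsilon_bound. intros eps Heps.
    destruct (Hb eps Heps) as [c [Hc Hs]]. apply (Ha c); assumption. }
  apply Rle_antisym; apply H; assumption.
Qed.

Definition mu (S : CSet) : R :=
  proj1_sig (constructive_indefinite_description _ (outer_measure_exists S)).

Lemma mu_spec S : outer_measure_is S (mu S).
Proof. unfold mu. destruct (constructive_indefinite_description _ _). assumption. Qed.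

Lemma mu_eq S r : outer_measure_is S r -> mu S = r.
Proof. intro H. apply (outer_measure_unique S); [apply mu_spec | exact H]. Qed.

Lemma mu_le_cover S c v : covers c S ->
  (forall n, sum_f_R0 (fun i => w (c i)) n <= v) -> mu S <= v.
Proof. intros. destruct (mu_spec S) as [H1 _]. eapply H1; eassumption. Qed.

Lemma mu_approx S eps : 0 < eps ->
  exists c, covers c S /\ forall n, sum_f_R0 (fun i => w (c i)) n <= mu S + eps.
Proof. intros. destruct (mu_spec S) as [_ H2]. apply H2. assumption. Qed.

Lemma mu_nonneg S : 0 <= mu S.
Proof.
  apply le_epsilon_bound. intros eps Heps. destruct (mu_approx S eps Heps) as [c [_ Hc]].
  specialize (Hc 0%nat). simpl in Hc. pose proof (w_pos (c 0%nat)). lra.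
Qed.

Lemma mu_mono (S T : CSet) : (forall x, S x -> T x) -> mu S <= mu T.
Proof.
  intro H. apply le_epsilon_bound. intros eps Heps. destruct (mu_approx T eps Heps) as [c [Hc Hs]].
  apply (mu_le_cover S c); [|assumption]. intros x Hx. apply Hc, H, Hx.
Qed.

Lemma mu_ext (S T : CSet) : (forall x, S x <-> T x) -> mu S = mu T.
Proof. intro H. apply Rle_antisym; apply mu_mono; intro x; apply H. Qed.

Lemma padding_sum K n : sum_f_R0 (fun i => w (repeat false (i + K))) n <= 2 * (/2)^K.
Proof.
  eapply Rle_trans; [|apply (geometric_tail K n)]. right. apply sum_eq. intros. apply w_repeat.
Qed.

Lemma mu_empty (S : CSet) : (forall x, ~ S x) -> mu S = 0.
Proof.
  intro H. apply Rle_antisym; [|apply mu_nonneg]. apply le_epsilon_bound. intros eps Heps.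
  destruct (geometric_tail_small eps Heps) as [K HK].
  apply (mu_le_cover S (fun i => repeat false (i + K))).
  - intros x Hx. exfalso. apply (H x Hx).
  - intro n. pose proof (padding_sum K n). lra.
Qed.

Lemma mu_cyl_le u : mu (cyl u) <= w u.
Proof.
  apply le_epsilon_bound. intros eps Heps. destruct (geometric_tail_small eps Heps) as [K HK].
  apply (mu_le_cover _ (fun i => match i with O => u | S j => repeat false (j + K) end)).
  - intros x Hx. exists 0%nat. exact Hx.
  - intro n. destruct n; [simpl; lra|].
    rewrite sum_cons. pose proof (padding_sum K n). cbv beta. lra.
Qed.

(* Enumerating ℕ×ℕ by the Cantor pairing, the first n+1 pairs lie in the
   square [0,n]², so partial sums of a nonnegative double series along the
   enumeration are bounded by sums over squares. *)
Lemma pairing_sum_le (g : nat * nat -> R) n : (forall p, 0 <= g p) ->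
  sum_f_R0 (fun k => g (Cantor.of_nat k)) n <=
  lsum (fun i => lsum (fun j => g (i, j)) (seq 0 (S n))) (seq 0 (S n)).
Proof.
  intro Hg. rewrite sum_lsum, <- lsum_prod.
  rewrite <- (lsum_map g Cantor.of_nat). apply lsum_incl; [exact Hg| |].
  - apply Injective_map_NoDup; [|apply seq_NoDup].
    intros a b Hab.
    rewrite <- (Cantor.cancel_to_of a), <- (Cantor.cancel_to_of b), Hab. reflexivity.
  - intros p Hp. apply in_map_iff in Hp. destruct Hp as [k [Hk Hk2]]. apply in_seq in Hk2.
    destruct p as [i j]. pose proof (Cantor.to_nat_non_decreasing i j) as Hij.
    rewrite <- Hk, Cantor.cancel_to_of in Hij. apply in_prod; apply in_seq; lia.
Qed.

Lemma mu_countable_subadditive (Z : CSet) (T : nat -> CSet) V :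
  (forall x, Z x -> exists i, T i x) ->
  (forall n, sum_f_R0 (fun i => mu (T i)) n <= V) -> mu Z <= V.
Proof.
  intros HZT HV. apply le_epsilon_bound. intros eps Heps.
  assert (Hap : forall i, exists c, covers c (T i) /\
      forall n, sum_f_R0 (fun j => w (c j)) n <= mu (T i) + eps * (/2)^(i + 1)).
  { intro i. apply mu_approx. assert (0 < (/2)^(i + 1)) by (apply pow_lt; lra). nra. }
  apply choice in Hap. destruct Hap as [C HC].
  apply (mu_le_cover Z (fun k => C (fst (Cantor.of_nat k)) (snd (Cantor.of_nat k)))).
  - intros x Hx. destruct (HZT x Hx) as [i Hi]. destruct (proj1 (HC i) x Hi) as [j Hj].
    exists (Cantor.to_nat (i, j)). rewrite Cantor.cancel_of_to. exact Hj.
  - intro n.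
    eapply Rle_trans; [apply (pairing_sum_le (fun p => w (C (fst p) (snd p))));
                       intro; apply Rlt_le, w_pos|].
    apply Rle_trans with (lsum (fun i => mu (T i) + eps * (/2)^(i + 1)) (seq 0 (S n))).
    + apply lsum_le. intros i _. cbn [fst snd]. rewrite <- sum_lsum. apply (proj2 (HC i)).
    + rewrite lsum_plus, lsum_scal, <- !sum_lsum.
      pose proof (HV n). pose proof (geometric_tail 1 n). nra.
Qed.

Lemma mu_union2 (Z S1 S2 : CSet) : (forall x, Z x -> S1 x \/ S2 x) -> mu Z <= mu S1 + mu S2.
Proof.
  intro H. apply (mu_countable_subadditive Z
    (fun i => match i with O => S1 | 1%nat => S2 | _ => fun _ => False end)).
  - intros x Hx. destruct (H x Hx); [exists 0%nat | exists 1%nat]; assumption.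
  - intro n. pose proof (mu_nonneg S1). pose proof (mu_nonneg S2).
    assert (He : mu (fun _ => False) = 0) by (apply mu_empty; auto).
    destruct n; simpl; [lra|]. induction n; simpl in *; [lra|]. rewrite He. lra.
Qed.

(** * The measure of a cylinder *)

(* share s c = μ(N_s ∩ N_c): the part of the cylinder N_c lying inside N_s. *)
Definition share (s c : list bool) : R :=
  if excluded_middle_informative (prefix c s) then w s
  else if excluded_middle_informative (prefix s c) then w c else 0.

Lemma share_nonneg s c : 0 <= share s c.
Proof.
  unfold share. destruct excluded_middle_informative; [apply Rlt_le, w_pos|].
  destruct excluded_middle_informative; [apply Rlt_le, w_pos| lra].
Qed.

Lemma share_le s c : share s c <= w c.
Proof.
  unfold share. destruct excluded_middle_informative as [H|H]; [apply w_prefix_le, H|].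
  destruct excluded_middle_informative; [lra| apply Rlt_le, w_pos].
Qed.

Lemma share_prefix s c : prefix c s -> share s c = w s.
Proof.
  intro H. unfold share. destruct excluded_middle_informative; [reflexivity|contradiction].
Qed.

Lemma share_child_in s c b : ~ prefix c s -> prefix (s ++ [b]) c -> share (s ++ [b]) c = w c.
Proof.
  intros H1 H2. unfold share. destruct excluded_middle_informative as [H|H].
  - apply prefix_snoc_inv in H; [|assumption]. subst. reflexivity.
  - destruct excluded_middle_informative; [reflexivity|contradiction].
Qed.

Lemma share_child_out s c b : ~ prefix c s -> ~ prefix (s ++ [b]) c -> share (s ++ [b]) c = 0.
Proof.
  intros H1 H2. unfold share. destruct excluded_middle_informative as [H|H].
  - apply prefix_snoc_inv in H; [|assumption]. subst. exfalso. apply H2, prefix_refl.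
  - destruct excluded_middle_informative; [contradiction|reflexivity].
Qed.

Lemma share_split s c : share s c = share (s ++ [false]) c + share (s ++ [true]) c.
Proof.
  destruct (classic (prefix c s)) as [H|H].
  - rewrite (share_prefix s c H), !share_prefix
      by (eapply prefix_trans; [exact H|apply prefix_app]).
    rewrite !w_snoc. lra.
  - destruct (classic (prefix s c)) as [H2|H2].
    + assert (Hne : s <> c) by (intro; subst; apply H, prefix_refl).
      destruct (prefix_strict s c H2 Hne) as [b Hb].
      unfold share at 1. destruct excluded_middle_informative; [contradiction|].
      destruct excluded_middle_informative; [|contradiction].
      assert (Hother : ~ prefix (s ++ [negb b]) c).
      { intro Hf. pose proof (prefix_snoc_bit _ _ _ _ Hb Hf). destruct b; discriminate. }
      destruct b; simpl in Hother.
      * rewrite (share_child_in s c true H Hb), (share_child_out s c false H Hother). lra.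
      * rewrite (share_child_in s c false H Hb), (share_child_out s c true H Hother). lra.
    + unfold share at 1. destruct excluded_middle_informative; [contradiction|].
      destruct excluded_middle_informative; [contradiction|].
      rewrite !share_child_out; try assumption; try lra;
        intro Hf; apply H2; exact (prefix_trans _ _ _ (prefix_app _ _) Hf).
Qed.

Definition undercovered (c : nat -> list bool) (s : list bool) : Prop :=
  forall n, sum_f_R0 (fun i => share s (c i)) n < w s.

Lemma undercovered_child c s :
  undercovered c s -> undercovered c (s ++ [false]) \/ undercovered c (s ++ [true]).
Proof.
  intro Hs. apply NNPP. intro Hn. apply not_or_and in Hn. destruct Hn as [H0 H1].
  apply not_all_ex_not in H0. apply not_all_ex_not in H1.
  destruct H0 as [n0 H0]. destruct H1 as [n1 H1]. apply Rnot_lt_le in H0, H1.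
  set (n := Nat.max n0 n1). specialize (Hs n).
  assert (Hadd : sum_f_R0 (fun i => share s (c i)) n =
    sum_f_R0 (fun i => share (s ++ [false]) (c i)) n +
    sum_f_R0 (fun i => share (s ++ [true]) (c i)) n).
  { rewrite <- sum_plus. apply sum_eq. intros. apply share_split. }
  assert (sum_f_R0 (fun i => share (s ++ [false]) (c i)) n0 <=
          sum_f_R0 (fun i => share (s ++ [false]) (c i)) n)
    by (apply sum_mono; [intro; apply share_nonneg| apply Nat.le_max_l]).
  assert (sum_f_R0 (fun i => share (s ++ [true]) (c i)) n1 <=
          sum_f_R0 (fun i => share (s ++ [true]) (c i)) n)
    by (apply sum_mono; [intro; apply share_nonneg| apply Nat.le_max_r]).
  rewrite !w_snoc in *. lra.
Qed.

(* König's lemma for undercovered cylinders: an undercovered N_u contains a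
   point all of whose longer restrictions are undercovered. *)
Lemma undercovered_point c u : undercovered c u ->
  exists x, cyl u x /\ forall n, (length u <= n)%nat -> undercovered c (restr x n).
Proof.
  intro Hu.
  set (next := fun s => if excluded_middle_informative (undercovered c (s ++ [false]))
                        then false else true).
  set (g := fix g k := match k with O => u | S k' => g k' ++ [next (g k')] end).
  assert (Hg1 : forall k, prefix (g k) (g (S k))) by (intro; apply prefix_app).
  assert (Hg2 : forall k, length (g k) = (length u + k)%nat).
  { induction k; simpl; [lia|]. rewrite length_app. simpl. simpl in IHk. lia. }
  assert (Hg3 : forall k, undercovered c (g k)).
  { induction k; [exact Hu|]. change (g (S k)) with (g k ++ [next (g k)]). unfold next.
    destruct excluded_middle_informative; [assumption|].
    destruct (undercovered_child _ _ IHk); [contradiction|assumption]. }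
  assert (Hx : forall k, cyl (g k) (chain_limit g))
    by (apply chain_limit_cyl; [assumption| intro k; rewrite Hg2; lia]).
  exists (chain_limit g). split; [exact (Hx 0%nat)|]. intros n Hn.
  specialize (Hx (n - length u)%nat). apply cyl_restr in Hx.
  rewrite Hg2 in Hx. replace (length u + (n - length u))%nat with n in Hx by lia.
  rewrite Hx. apply Hg3.
Qed.

Lemma cyl_cover_lower u c v : covers c (cyl u) ->
  (forall n, sum_f_R0 (fun i => w (c i)) n <= v) -> w u <= v.
Proof.
  intros Hc Hv. apply Rnot_lt_le. intro Hlt.
  assert (Hu : undercovered c u).
  { intro n. apply Rle_lt_trans with v; [|exact Hlt]. eapply Rle_trans; [|apply (Hv n)].
    apply sum_le. intro. apply share_le. }
  destruct (undercovered_point c u Hu) as [x [Hxu Hx]].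
  destruct (Hc x Hxu) as [i Hi].
  set (n := Nat.max (length u) (length (c i))).
  specialize (Hx n (Nat.le_max_l _ _) i).
  assert (Hp : prefix (c i) (restr x n)).
  { apply (cyl_comparable _ _ x); [exact Hi| apply restr_cyl|].
    rewrite length_restr. apply Nat.le_max_r. }
  pose proof (sum_term (fun j => share (restr x n) (c j)) i i
                (fun j => share_nonneg _ _) (le_n i)) as Ht.
  cbv beta in Ht. rewrite share_prefix in Ht by exact Hp. lra.
Qed.

Lemma mu_cyl u : mu (cyl u) = w u.
Proof.
  apply Rle_antisym; [apply mu_cyl_le|]. apply le_epsilon_bound. intros eps Heps.
  destruct (mu_approx (cyl u) eps Heps) as [c [Hc Hs]]. eapply cyl_cover_lower; eassumption.
Qed.

(** * Relative densities *)

(* mass A s = μ(A ∩ N_s) and dens A s = mass A s / μ(N_s);  1 - dens A s is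
   the deficit of s. *)
Definition mass (A : CSet) (s : list bool) : R := mu (inter A (cyl s)).
Definition dens (A : CSet) (s : list bool) : R := mass A s / w s.

Lemma mass_eq A s : mass A s = dens A s * w s.
Proof. unfold dens. pose proof (w_pos s). field. lra. Qed.

Lemma dens_le1 A s : dens A s <= 1.
Proof.
  assert (H : mass A s <= w s).
  { unfold mass. rewrite <- (mu_cyl s). apply mu_mono. intros x [_ Hx]. exact Hx. }
  rewrite mass_eq in H. pose proof (w_pos s). nra.
Qed.

Lemma dens_children A s : dens A s <= (dens A (s ++ [false]) + dens A (s ++ [true])) / 2.
Proof.
  assert (H : mass A s <= mass A (s ++ [false]) + mass A (s ++ [true])).
  { apply mu_union2. intros x [Ha Hc]. apply cyl_extend in Hc.
    destruct (x (length s)); [right|left]; split; assumption. }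
  rewrite !mass_eq, !w_snoc in H. pose proof (w_pos s). nra.
Qed.

(* Hence deficits at most double from a node to a child ... *)
Lemma dens_child_ge A s b : 2 * dens A s - 1 <= dens A (s ++ [b]).
Proof.
  pose proof (dens_children A s).
  pose proof (dens_le1 A (s ++ [false])). pose proof (dens_le1 A (s ++ [true])).
  destruct b; lra.
Qed.

Lemma dens_child_max A s : exists b, dens A s <= dens A (s ++ [b]).
Proof.
  pose proof (dens_children A s).
  destruct (Rle_or_lt (dens A (s ++ [false])) (dens A (s ++ [true])));
    [exists true | exists false]; lra.
Qed.

Lemma dist_one_deficit A s : R_dist (dens A s) 1 = 1 - dens A s.
Proof.
  unfold R_dist. pose proof (dens_le1 A s). rewrite Rabs_minus_sym, Rabs_right; lra.
Qed.

Lemma Phi_char A x : Phi A x <-> Un_cv (fun n => dens A (restr x n)) 1.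
Proof.
  split.
  - intros [d [Hd Hc]] eps Heps. destruct (Hc eps Heps) as [N HN]. exists N. intros n Hn.
    specialize (HN n Hn). unfold dens, mass. rewrite (mu_eq _ _ (Hd n)). exact HN.
  - intro H. exists (fun n => mass A (restr x n)). split; [intro n; apply mu_spec| exact H].
Qed.

Lemma mu_inside_cylinders (S : CSet) s theta : 0 <= theta ->
  (forall r, mu (inter S (cyl (s ++ r))) <= theta * w (s ++ r)) ->
  forall c, mu (fun x => S x /\ cyl s x /\ cyl c x) <= theta * w c.
Proof.
  intros Htheta H c.
  destruct (classic (exists x, S x /\ cyl s x /\ cyl c x)) as [[x [_ [Hxs Hxc]]]|Hn].
  - destruct (le_lt_dec (length s) (length c)) as [Hl|Hl].
    + destruct (cyl_comparable _ _ _ Hxs Hxc Hl) as [r Hr]. rewrite Hr.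
      eapply Rle_trans; [|apply H]. apply mu_mono.
      intros y [Hy1 [_ Hy3]]. split; [exact Hy1|exact Hy3].
    + assert (Hp : prefix c s) by (apply (cyl_comparable _ _ x); [exact Hxc|exact Hxs|lia]).
      apply Rle_trans with (theta * w (s ++ [])).
      * eapply Rle_trans; [|apply H]. apply mu_mono. intros y [Hy1 [Hy2 _]].
        split; [exact Hy1|]. rewrite app_nil_r. exact Hy2.
      * rewrite app_nil_r. apply Rmult_le_compat_l; [lra|]. apply w_prefix_le, Hp.
  - rewrite mu_empty by (intros x Hx; apply Hn; exists x; exact Hx).
    pose proof (w_pos c). nra.
Qed.

(* Weak Lebesgue density theorem: if S ∩ N_s has positive outer measure then
   some subcylinder of N_s is filled by S up to relative measure > 1 - δ. *)
Lemma density_extension (S : CSet) s delta : 0 < delta < 1 -> 0 < mu (inter S (cyl s)) ->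
  exists r, (1 - delta) * w (s ++ r) < mu (inter S (cyl (s ++ r))).
Proof.
  intros Hd Hpos. apply NNPP. intro Hno.
  assert (H : forall r, mu (inter S (cyl (s ++ r))) <= (1 - delta) * w (s ++ r)).
  { intro r. apply Rnot_lt_le. intro Hl. apply Hno. exists r. exact Hl. }
  set (m := mu (inter S (cyl s))) in *.
  destruct (mu_approx (inter S (cyl s)) (m * delta / 2)) as [c [Hc Hs]]; [nra|].
  assert (Hle : m <= (1 - delta) * (m + m * delta / 2)).
  { apply (mu_countable_subadditive _ (fun i x => S x /\ cyl s x /\ cyl (c i) x)).
    - intros x [Hx1 Hx2]. destruct (Hc x (conj Hx1 Hx2)) as [i Hi]. exists i. tauto.
    - intro n. apply Rle_trans with (sum_f_R0 (fun i => w (c i) * (1 - delta)) n).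
      + apply sum_le. intro i. rewrite Rmult_comm. apply mu_inside_cylinders; [lra|exact H].
      + rewrite <- scal_sum. apply Rmult_le_compat_l; [lra|]. apply Hs. }
  nra.
Qed.

Lemma mu_cyl_diff A u : measurable A -> mu (diff (cyl u) A) = w u - mass A u.
Proof.
  intro HA.
  pose proof (HA (cyl u) (mu (cyl u)) (mu (inter (cyl u) A)) (mu (diff (cyl u) A))
      (mu_spec _) (mu_spec _) (mu_spec _)) as H.
  rewrite mu_cyl in H. unfold mass.
  rewrite (mu_ext (inter A (cyl u)) (inter (cyl u) A)); [lra|].
  intro y. unfold inter. tauto.
Qed.

Lemma low_density_extension A : measurable A -> empty_interior (Phi A) ->
  forall t delta, 0 < delta < 1 -> exists r, dens A (t ++ r) < delta.
Proof.
  intros HA HE t delta Hd. apply NNPP. intro Hno.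
  assert (H : forall r, delta <= dens A (t ++ r)).
  { intro r. apply Rnot_lt_le. intro Hl. apply Hno. exists r. exact Hl. }
  set (S := diff (cyl t) A).
  assert (Hnull : mu (inter S (cyl t)) <= 0).
  { apply Rnot_lt_le. intro Hpos. destruct (density_extension S t delta Hd Hpos) as [r Hr].
    assert (Hsub : mu (inter S (cyl (t ++ r))) <= mu (diff (cyl (t ++ r)) A)).
    { apply mu_mono. intros y [[_ Hy1] Hy2]. split; assumption. }
    rewrite mu_cyl_diff, mass_eq in Hsub by exact HA.
    specialize (H r). pose proof (w_pos (t ++ r)). nra. }
  assert (Hfull : forall r, dens A (t ++ r) = 1).
  { intro r. apply Rle_antisym; [apply dens_le1|].
    assert (Hsub : mu (diff (cyl (t ++ r)) A) <= mu (inter S (cyl t))).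
    { apply mu_mono. intros y [Hy1 Hy2].
      split; [split; [eapply cyl_app; exact Hy1|exact Hy2]|]. eapply cyl_app; exact Hy1. }
    rewrite mu_cyl_diff, mass_eq in Hsub by exact HA.
    pose proof (w_pos (t ++ r)). pose proof (mu_nonneg (inter S (cyl t))). nra. }
  apply (HE (cyl t) (cyl_open t)) with (fun i => nth i t false); [|intros i Hi; reflexivity].
  intros x Hx. apply Phi_char. intros eps Heps. exists (length t). intros n Hn.
  apply cyl_restr in Hx. destruct (restr_prefix x _ _ Hn) as [r Hr]. rewrite Hx in Hr.
  rewrite dist_one_deficit, Hr, Hfull. lra.
Qed.

(** * Paths with bounded deficit: dipping *)

Definition bounded_path (A : CSet) (t r : list bool) (theta : R) : Prop :=
  forall k, (k <= length r)%nat -> 1 - dens A (t ++ firstn k r) <= theta.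

Lemma bounded_path_end A t r theta : bounded_path A t r theta -> 1 - dens A (t ++ r) <= theta.
Proof. intro H. specialize (H (length r) (le_n _)). rewrite firstn_all in H. exact H. Qed.

Lemma bounded_path_mono A t r theta theta' :
  theta <= theta' -> bounded_path A t r theta -> bounded_path A t r theta'.
Proof. intros Hle H k Hk. specialize (H k Hk). lra. Qed.

Lemma bounded_path_app A t r1 r2 theta :
  bounded_path A t r1 theta -> bounded_path A (t ++ r1) r2 theta ->
  bounded_path A t (r1 ++ r2) theta.
Proof.
  intros H1 H2 k Hk. rewrite length_app in Hk. rewrite firstn_app.
  destruct (le_lt_dec k (length r1)) as [Hl|Hl].
  - replace (k - length r1)%nat with 0%nat by lia. rewrite firstn_0, app_nil_r. apply H1, Hl.
  - rewrite firstn_all2 by lia. rewrite app_assoc. apply H2. lia.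
Qed.

(* Dip: from deficit < η one reaches deficit ≥ η without any deficit
   exceeding 2η, stopping at the first string of deficit ≥ η (deficits at
   most double from parent to child). *)
Lemma dip_extension A eta t : 0 < eta < 1 -> measurable A -> empty_interior (Phi A) ->
  1 - dens A t < eta -> exists r, bounded_path A t r (2 * eta) /\ eta <= 1 - dens A (t ++ r).
Proof.
  intros He HA HE Ht. destruct (low_density_extension A HA HE t (1 - eta)) as [r0 Hr0]; [lra|].
  destruct (least_nat (fun k => (k <= length r0)%nat /\ eta <= 1 - dens A (t ++ firstn k r0)))
    as [k [[Hk1 Hk2] Hk3]].
  { exists (length r0). split; [lia|]. rewrite firstn_all. lra. }
  destruct k as [|k']; [rewrite firstn_0, app_nil_r in Hk2; lra|].
  assert (Hbefore : forall k, (k <= k')%nat -> 1 - dens A (t ++ firstn k r0) < eta).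
  { intros k Hk. apply Rnot_le_lt. intro Hc. apply (Hk3 k); [lia|]. split; [lia|exact Hc]. }
  assert (Hlast : 1 - dens A (t ++ firstn (S k') r0) <= 2 * (1 - dens A (t ++ firstn k' r0))).
  { rewrite firstn_S_snoc, app_assoc by lia.
    pose proof (dens_child_ge A (t ++ firstn k' r0) (nth k' r0 false)). lra. }
  exists (firstn (S k') r0). split; [|exact Hk2].
  intros k Hk. rewrite length_firstn in Hk.
  rewrite firstn_firstn. replace (Nat.min k (S k')) with k by lia.
  pose proof (Hbefore k' (le_n k')) as Hk'. destruct (Nat.eq_dec k (S k')) as [->|Hne]; [lra|].
  specialize (Hbefore k ltac:(lia)). lra.
Qed.

(** * Paths with bounded deficit: climbing *)

Fixpoint pos_of_string (s : list bool) : positive :=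
  match s with
  | [] => xH
  | true :: s' => xI (pos_of_string s')
  | false :: s' => xO (pos_of_string s')
  end.

Fixpoint string_of_pos (p : positive) : list bool :=
  match p with
  | xH => []
  | xI p' => true :: string_of_pos p'
  | xO p' => false :: string_of_pos p'
  end.

Definition string_of_nat (n : nat) : list bool := string_of_pos (Pos.of_succ_nat n).

Lemma string_of_nat_inj : Injective string_of_nat.
Proof.
  assert (H : forall p, pos_of_string (string_of_pos p) = p)
    by (induction p; simpl; rewrite ?IHp; reflexivity).
  intros a b Hab. unfold string_of_nat in Hab. apply (f_equal pos_of_string) in Hab.
  rewrite !H in Hab. apply SuccNat2Pos.inj, Hab.
Qed.

Lemma string_of_nat_surj s : exists n, string_of_nat n = s.
Proof.
  destruct (Pos2Nat.is_succ (pos_of_string s)) as [n Hn]. exists n. unfold string_of_nat.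
  rewrite (SuccNat2Pos.inv n (pos_of_string s) Hn). clear Hn.
  induction s as [|[|] s IH]; simpl; rewrite ?IH; reflexivity.
Qed.

Lemma antichain_weight K : forall u (l : list (list bool)), NoDup l ->
  (forall v, In v l -> prefix u v /\ (length v <= length u + K)%nat) ->
  (forall a b, In a l -> In b l -> prefix a b -> a = b) -> lsum w l <= w u.
Proof.
  assert (Hsingle : forall (l : list (list bool)) u, NoDup l -> (forall v, In v l -> v = u) ->
            lsum w l <= w u).
  { intros l u Hn Hv. destruct l as [|a [|b l]]; simpl.
    - apply Rlt_le, w_pos.
    - rewrite (Hv a) by (left; reflexivity). lra.
    - exfalso. inversion Hn; subst. apply H1. left.
      rewrite (Hv a), (Hv b); [reflexivity| |]; simpl; auto. }
  induction K as [|K IH]; intros u l Hn Hv Hac.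
  - apply Hsingle; [exact Hn|]. intros v Hvl. destruct (Hv v Hvl) as [[r Hr] Hl].
    rewrite Hr, length_app in Hl. destruct r; [rewrite Hr, app_nil_r; reflexivity|simpl in Hl; lia].
  - destruct (classic (In u l)) as [Hu|Hu].
    { apply Hsingle; [exact Hn|]. intros v Hvl. symmetry. apply Hac; auto. apply Hv, Hvl. }
    set (bit := fun v : list bool => nth (length u) v false).
    assert (Hb : forall v, In v l -> prefix (u ++ [bit v]) v).
    { intros v Hvl. destruct (Hv v Hvl) as [Hp _].
      destruct (prefix_strict u v Hp) as [b [r Hr]]; [intro; subst; contradiction|].
      unfold bit. rewrite Hr, <- app_assoc, app_nth2, Nat.sub_diag by lia. simpl.
      exists r. rewrite <- app_assoc. reflexivity. }
    assert (Hhalf : forall b, lsum w (filter (fun v => Bool.eqb (bit v) b) l) <= w (u ++ [b])).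
    { intro b. apply IH.
      - apply NoDup_filter, Hn.
      - intros v Hvl. apply filter_In in Hvl. destruct Hvl as [Hvl Hbv].
        apply Bool.eqb_prop in Hbv. specialize (Hb v Hvl). rewrite Hbv in Hb. split; [exact Hb|].
        destruct (Hv v Hvl) as [_ Hl]. rewrite length_app. simpl. lia.
      - intros a b' Ha Hb'. apply filter_In in Ha, Hb'. apply Hac; tauto. }
    rewrite (lsum_filter w (fun v => Bool.eqb (bit v) true) l).
    assert (Hneg : filter (fun v => negb (Bool.eqb (bit v) true)) l =
                   filter (fun v => Bool.eqb (bit v) false) l)
      by (apply filter_ext; intro v; destruct (bit v); reflexivity).
    rewrite Hneg. pose proof (Hhalf true). pose proof (Hhalf false). rewrite !w_snoc in *. lra.
Qed.

Lemma lengths_bounded (l : list (list bool)) : exists K, forall v, In v l -> (length v <= K)%nat.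
Proof.
  induction l as [|a l [K HK]]; [exists 0%nat; intros v []|].
  exists (Nat.max (length a) K). intros v [->|Hv]; [lia|]. specialize (HK v Hv). lia.
Qed.

Section Climb.
Variables (A : CSet) (u : list bool) (theta : R).

Definition stays_below (x : Cantor) : Prop :=
  cyl u x /\ forall k, 1 - dens A (restr x (length u + k)) <= theta.

Definition first_exit (v : list bool) : Prop :=
  exists r, v = u ++ r /\ theta < 1 - dens A (u ++ r) /\
    forall k, (k < length r)%nat -> 1 - dens A (u ++ firstn k r) <= theta.

(* If no θ-bounded path from u reaches deficit < ε, the points of A staying
   below θ form a null set: otherwise by the density theorem some cylinder
   N_(u ++ r) meeting them would have deficit < ε. *)
Lemma stays_below_null eps : 0 < eps ->
  (forall r, bounded_path A u r theta -> eps <= 1 - dens A (u ++ r)) ->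
  mu (inter (inter A stays_below) (cyl u)) <= 0.
Proof.
  intros Heps Hfar. apply Rnot_lt_le. intro Hpos.
  set (delta := Rmin eps (1/2)).
  assert (Hd : 0 < delta < 1).
  { unfold delta. split; [apply Rmin_glb_lt; lra| pose proof (Rmin_r eps (1/2)); lra]. }
  destruct (density_extension _ u delta Hd Hpos) as [r Hr].
  destruct (classic (exists x, inter (inter A stays_below) (cyl (u ++ r)) x))
    as [[x [[HxA [Hxu Hxk]] Hxr]]|Hn].
  - assert (Hpath : bounded_path A u r theta).
    { intros k Hk. rewrite <- (restr_in_segment x u r k Hxr Hk). apply Hxk. }
    specialize (Hfar r Hpath).
    assert (Hsub : mu (inter (inter A stays_below) (cyl (u ++ r))) <= mass A (u ++ r)).
    { apply mu_mono. intros y [[Hy1 _] Hy2]. split; assumption. }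
    assert (Hde : delta <= eps) by apply Rmin_l.
    rewrite mass_eq in Hsub. pose proof (w_pos (u ++ r)). nra.
  - rewrite mu_empty in Hr by (intros y Hy; apply Hn; exists y; exact Hy).
    pose proof (w_pos (u ++ r)). nra.
Qed.

Lemma first_exit_cover x : A x -> cyl u x ->
  stays_below x \/ exists v, first_exit v /\ cyl v x.
Proof.
  intros HxA Hxu.
  destruct (classic (forall k, 1 - dens A (restr x (length u + k)) <= theta)) as [Hall|Hn];
    [left; split; assumption|right].
  destruct (least_nat (fun k => theta < 1 - dens A (restr x (length u + k)))) as [k [Hk1 Hk2]].
  { apply not_all_ex_not in Hn. destruct Hn as [k Hk]. exists k. apply Rnot_le_lt, Hk. }
  exists (restr x (length u + k)). split; [|apply restr_cyl].
  assert (Hp : prefix u (restr x (length u + k))).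
  { apply cyl_restr in Hxu. rewrite <- Hxu at 1. apply restr_prefix. lia. }
  destruct Hp as [r Hr]. exists r. split; [exact Hr|]. split; [rewrite <- Hr; exact Hk1|].
  assert (Hlen : length r = k).
  { apply (f_equal (@length bool)) in Hr. rewrite length_restr, length_app in Hr. lia. }
  intros k' Hk'. rewrite <- (restr_in_segment x u r k'); [| rewrite <- Hr; apply restr_cyl | lia].
  apply Rnot_lt_le. apply Hk2. lia.
Qed.

Lemma first_exit_antichain a b : first_exit a -> first_exit b -> prefix a b -> a = b.
Proof.
  intros [ra [-> [Ha _]]] [rb [-> [_ Hb]]] [q Hq].
  rewrite <- app_assoc in Hq. apply app_inv_head in Hq.
  destruct q as [|c q]; [rewrite Hq, app_nil_r; reflexivity|exfalso].
  assert (Hl : (length ra < length rb)%nat) by (rewrite Hq, length_app; simpl; lia).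
  specialize (Hb _ Hl). rewrite Hq, firstn_app, firstn_all, Nat.sub_diag, firstn_0, app_nil_r in Hb.
  lra.
Qed.

Lemma first_exits_weight (l : list (list bool)) :
  NoDup l -> (forall v, In v l -> first_exit v) -> lsum w l <= w u.
Proof.
  intros Hn Hl. destruct (lengths_bounded l) as [K HK]. apply (antichain_weight K); [exact Hn| |].
  - intros v Hv. split; [destruct (Hl v Hv) as [r [-> _]]; apply prefix_app|].
    specialize (HK v Hv). lia.
  - intros a b Ha Hb. apply first_exit_antichain; apply Hl; assumption.
Qed.

Lemma mass_first_exit v : first_exit v -> mass A v <= (1 - theta) * w v.
Proof. intros [r [-> [Hr _]]]. rewrite mass_eq. pose proof (w_pos (u ++ r)). nra. Qed.

(* Climb: from deficit < θ ≤ 1 one reaches any deficit ε > 0 along a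
   θ-bounded path.  Otherwise A ∩ N_u would be covered, up to a null set,
   by the first exits, an antichain on which A has density < 1 - θ, so that
   mass A u ≤ (1 - θ) w u. *)
Lemma climb_extension_core eps : 0 < eps -> theta <= 1 -> 1 - dens A u < theta ->
  exists r, bounded_path A u r theta /\ 1 - dens A (u ++ r) < eps.
Proof.
  intros Heps Htheta Hu. apply NNPP. intro Hno.
  assert (Hnull : mu (inter (inter A stays_below) (cyl u)) <= 0).
  { apply (stays_below_null eps Heps). intros r Hr. apply Rnot_lt_le. intro Hl.
    apply Hno. exists r. split; assumption. }
  set (is_exit := fun v => if excluded_middle_informative (first_exit v) then true else false).
  set (T := fun i => match i with
                     | O => inter (inter A stays_below) (cyl u)
                     | S j => fun x =>
                         first_exit (string_of_nat j) /\ inter A (cyl (string_of_nat j)) x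
                     end).
  assert (HT : forall j, mu (T (S j)) <=
     if is_exit (string_of_nat j) then (1 - theta) * w (string_of_nat j) else 0).
  { intro j. simpl. unfold is_exit. destruct excluded_middle_informative as [Hb|Hb].
    - eapply Rle_trans; [|apply mass_first_exit, Hb]. apply mu_mono. intros y [_ Hy]. exact Hy.
    - right. apply mu_empty. intros y [Hy _]. contradiction. }
  assert (Hle : mass A u <= (1 - theta) * w u).
  { apply (mu_countable_subadditive _ T).
    - intros x [HxA Hxu]. destruct (first_exit_cover x HxA Hxu) as [Hs|[v [Hv Hxv]]].
      + exists 0%nat. split; [split|]; assumption.
      + destruct (string_of_nat_surj v) as [j <-]. exists (S j).
        split; [exact Hv|split; assumption].
    - intros [|n]; [simpl; pose proof (w_pos u); nra|].
      rewrite sum_cons. eapply Rle_trans; [apply Rplus_le_compat; [exact Hnull| apply sum_le, HT]|].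
      rewrite Rplus_0_l, sum_lsum, lsum_filter_map. apply Rmult_le_compat_l; [lra|].
      apply first_exits_weight.
      + apply NoDup_filter, Injective_map_NoDup; [apply string_of_nat_inj| apply seq_NoDup].
      + intros v Hv. apply filter_In in Hv. destruct Hv as [_ Hv]. unfold is_exit in Hv.
        destruct excluded_middle_informative; [assumption|discriminate]. }
  rewrite mass_eq in Hle. pose proof (w_pos u). nra.
Qed.

End Climb.

(* The same, with a nonempty path: first step to a child of no smaller density. *)
Lemma climb_extension A theta eps u : 0 < eps -> theta <= 1 -> 1 - dens A u < theta ->
  exists r, r <> [] /\ bounded_path A u r theta /\ 1 - dens A (u ++ r) < eps.
Proof.
  intros Heps Htheta Hu. destruct (dens_child_max A u) as [b Hb].
  destruct (climb_extension_core A (u ++ [b]) theta eps) as [r [Hr1 Hr2]]; try assumption; [lra|].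
  exists ([b] ++ r). split; [discriminate|]. split.
  - apply bounded_path_app; [|exact Hr1].
    intros [|[|k]] Hk; simpl in *; [rewrite app_nil_r; lra| lra| lia].
  - rewrite app_assoc. exact Hr2.
Qed.

(** * Φ(A) is Π⁰₃ *)

(* x ∈ Φ(A) iff ∀k ∃N, x lies in the closed set of points whose densities
   beyond N stay within 1/(k+1) of 1. *)
Lemma Phi_Pi03 A : Pi03 (Phi A).
Proof.
  set (close := fun k N x => forall n, (N <= n)%nat ->
                  Rabs (dens A (restr x n) - 1) < / (INR k + 1)).
  exists (fun k x => exists N, close k N x). split.
  - intro k. exists (close k). split; [|intro x; tauto].
    intros N x Hx. apply not_all_ex_not in Hx. destruct Hx as [n Hn].
    apply imply_to_and in Hn. destruct Hn as [Hn1 Hn2].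
    exists n. intros y Hy Hclose. apply Hn2. rewrite (agree_restr n x y Hy). apply Hclose, Hn1.
  - intro x. rewrite Phi_char. split.
    + intros H k. destruct (H (/ (INR k + 1))) as [N HN].
      { apply Rinv_0_lt_compat. pose proof (pos_INR k). lra. }
      exists N. intros n Hn. apply HN, Hn.
    + intros H eps Heps. destruct (inv_succ_small eps Heps) as [K HK]. destruct (H K) as [N HN].
      exists N. intros n Hn. unfold R_dist. eapply Rlt_trans; [apply HN, Hn|exact HK].
Qed.

(** * Detecting membership in a Σ⁰₂ set by finitely many switches *)

Open Scope nat_scope.

Lemma eventually_constant (a : nat -> nat) b : (forall j, a j <= a (S j)) -> (forall j, a j <= b) ->
  exists J, forall j, J <= j -> a (S j) = a j.
Proof.
  intros Hm Hb.
  assert (Hm' : forall j j', j <= j' -> a j <= a j').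
  { intros j j' H. induction H as [|mm H IH]; [lia|]. specialize (Hm mm). lia. }
  assert (H : forall c j0, b - a j0 <= c -> exists J, forall j, J <= j -> a (S j) = a j).
  { induction c as [|c IH]; intros j0 Hc.
    - exists j0. intros j Hj. pose proof (Hm' j0 j Hj). pose proof (Hm' j0 (S j) ltac:(lia)).
      specialize (Hb (S j)). specialize (Hm j). lia.
    - destruct (classic (forall j, j0 <= j -> a (S j) = a j)) as [H|H]; [exists j0; exact H|].
      apply not_all_ex_not in H. destruct H as [j H].
      apply imply_to_and in H. destruct H as [H1 H2].
      apply (IH (S j)). specialize (Hm' j0 j H1). specialize (Hm j). lia. }
  apply (H (b - a 0) 0). lia.
Qed.

Section Switches.
(* A Σ⁰₂ family: the k-th set is ⋃_n F k n. *)
Variable F : nat -> nat -> CSet.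

Definition meets k n s := exists y, cyl s y /\ F k n y.

Fixpoint search_meet k s n fuel : nat :=
  match fuel with
  | O => n
  | S f => if excluded_middle_informative (meets k n s) then n else search_meet k s (S n) f
  end.

(* first_meet k j x: the least n ≤ j such that N_(x|j) meets F k n, or j+1.
   It depends only on x|j and is nondecreasing in j. *)
Definition first_meet k j x := search_meet k (restr x j) 0 (S j).

Definition switches k j x := first_meet k (S j) x <> first_meet k j x.

Lemma search_meet_spec k s fuel : forall n, let r := search_meet k s n fuel in
  n <= r <= n + fuel /\ (forall i, n <= i < r -> ~ meets k i s) /\
  (r < n + fuel -> meets k r s).
Proof.
  induction fuel as [|f IH]; intros n; simpl.
  - split; [lia|]. split; intros; lia.
  - destruct excluded_middle_informative as [Hc|Hc].
    + split; [lia|]. split; [intros; lia|intros; exact Hc].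
    + destruct (IH (S n)) as [H1 [H2 H3]]. split; [lia|]. split.
      * intros i Hi. destruct (Nat.eq_dec i n) as [->|Hne]; [exact Hc|]. apply H2. lia.
      * intro Hl. apply H3. lia.
Qed.

Lemma first_meet_spec k j x : first_meet k j x <= S j /\
  (forall i, i < first_meet k j x -> ~ meets k i (restr x j)) /\
  (first_meet k j x < S j -> meets k (first_meet k j x) (restr x j)).
Proof.
  unfold first_meet. destruct (search_meet_spec k (restr x j) (S j) 0) as [H1 [H2 H3]].
  split; [lia|]. split; [intros i Hi; apply H2; lia| exact H3].
Qed.

Lemma meets_restr_S k n x j : meets k n (restr x (S j)) -> meets k n (restr x j).
Proof.
  intros [y [Hy1 Hy2]]. exists y. split; [|exact Hy2].
  eapply cyl_prefix; [|exact Hy1]. apply restr_prefix. lia.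
Qed.

Lemma first_meet_mono k j x : first_meet k j x <= first_meet k (S j) x.
Proof.
  destruct (first_meet_spec k j x) as [A1 [A2 _]].
  destruct (first_meet_spec k (S j) x) as [_ [_ B3]].
  apply Nat.nlt_ge. intro Hlt. apply (A2 _ Hlt). apply meets_restr_S. apply B3. lia.
Qed.

Lemma first_meet_bound k n0 x j : F k n0 x -> first_meet k j x <= n0.
Proof.
  intro Hx. destruct (first_meet_spec k j x) as [_ [A2 _]].
  apply Nat.nlt_ge. intro Hlt. apply (A2 _ Hlt). exists x. split; [apply restr_cyl|exact Hx].
Qed.

(* If x avoids the closed sets F k n, then for each N, x|j eventually stops
   meeting F k 0, ..., F k N, so first_meet k j x tends to infinity. *)
Lemma first_meet_unbounded k x : (forall n, is_closed (F k n)) -> (forall n, ~ F k n x) ->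
  forall N, exists J, forall j, J <= j -> N < first_meet k j x.
Proof.
  intros Hcl Hn N.
  assert (Hleave : forall n, exists m, forall j, m <= j -> ~ meets k n (restr x j)).
  { intro n. destruct (Hcl n x (Hn n)) as [m Hm]. exists m. intros j Hj [y [Hy1 Hy2]].
    apply (Hm y); [|exact Hy2]. apply cyl_restr in Hy1. rewrite length_restr in Hy1.
    apply restr_agree in Hy1. intros i Hi. symmetry. apply Hy1. lia. }
  assert (Hall : exists J, forall j, J <= j -> forall n, n <= N -> ~ meets k n (restr x j)).
  { induction N as [|N [J HJ]].
    - destruct (Hleave 0) as [m Hm]. exists m. intros j Hj n Hn0. replace n with 0 by lia. auto.
    - destruct (Hleave (S N)) as [m Hm]. exists (Nat.max J m). intros j Hj n Hn0.
      destruct (Nat.eq_dec n (S N)) as [->|Hne]; [apply Hm; lia| apply HJ; lia]. }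
  destruct Hall as [J HJ]. exists (Nat.max J N). intros j Hj.
  destruct (first_meet_spec k j x) as [A1 [_ A3]].
  apply Nat.nle_gt. intro Hle. apply (HJ j ltac:(lia) _ Hle). apply A3. lia.
Qed.

Lemma union_iff_finitely_many_switches k x : (forall n, is_closed (F k n)) ->
  ((exists n, F k n x) <-> exists J, forall j, J <= j -> ~ switches k j x).
Proof.
  intro Hcl. split.
  - intros [n0 Hn0]. destruct (eventually_constant (fun j => first_meet k j x) n0) as [J HJ].
    + intro. apply first_meet_mono.
    + intro. apply first_meet_bound, Hn0.
    + exists J. intros j Hj Hf. apply Hf, HJ, Hj.
  - intros [J HJ]. apply NNPP. intro Hno.
    assert (Hn : forall n, ~ F k n x) by (intros n Hn; apply Hno; exists n; exact Hn).
    destruct (first_meet_unbounded k x Hcl Hn (first_meet k J x)) as [J' HJ'].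
    assert (Hc : forall j, J <= j -> first_meet k j x = first_meet k J x).
    { intros j Hj. induction Hj as [|mm Hj IHHj]; [reflexivity|]. rewrite <- IHHj.
      apply NNPP. intro Hs. apply (HJ mm); [lia|exact Hs]. }
    specialize (HJ' (Nat.max J J') ltac:(lia)). rewrite (Hc (Nat.max J J') ltac:(lia)) in HJ'. lia.
Qed.

Fixpoint search_switch j x k fuel : option nat :=
  match fuel with
  | O => None
  | S f => if excluded_middle_informative (switches k j x) then Some k
           else search_switch j x (S k) f
  end.

Definition least_switch j x := search_switch j x 0 (S j).

Lemma search_switch_spec j x fuel : forall k0, match search_switch j x k0 fuel with
  | Some k => k0 <= k < k0 + fuel /\ switches k j x /\ (forall i, k0 <= i < k -> ~ switches i j x)
  | None => forall i, k0 <= i < k0 + fuel -> ~ switches i j x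
  end.
Proof.
  induction fuel as [|f IH]; intro k0; simpl; [intros; lia|].
  destruct excluded_middle_informative as [Hf|Hf].
  - split; [lia|]. split; [exact Hf| intros; lia].
  - specialize (IH (S k0)). destruct (search_switch j x (S k0) f) as [k|].
    + destruct IH as [H1 [H2 H3]]. split; [lia|]. split; [exact H2|].
      intros i Hi. destruct (Nat.eq_dec i k0) as [->|]; [exact Hf|]. apply H3. lia.
    + intros i Hi. destruct (Nat.eq_dec i k0) as [->|]; [exact Hf|]. apply IH. lia.
Qed.

Lemma least_switch_some j x k : least_switch j x = Some k ->
  k <= j /\ switches k j x /\ forall i, i < k -> ~ switches i j x.
Proof.
  intro H. pose proof (search_switch_spec j x (S j) 0) as Hs. unfold least_switch in H.
  rewrite H in Hs. destruct Hs as [H1 [H2 H3]].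
  split; [lia|]. split; [exact H2|]. intros i Hi. apply H3. lia.
Qed.

Lemma least_switch_none j x : least_switch j x = None -> forall i, i <= j -> ~ switches i j x.
Proof.
  intro H. pose proof (search_switch_spec j x (S j) 0) as Hs. unfold least_switch in H.
  rewrite H in Hs. intros i Hi. apply Hs. lia.
Qed.

(* least_switch j x depends only on x|(j+1); this gives continuity. *)
Lemma least_switch_local j x y : agree (S j) x y -> least_switch j x = least_switch j y.
Proof.
  intro H.
  assert (Hsw : forall k, switches k j x <-> switches k j y).
  { intro k. unfold switches, first_meet.
    rewrite (agree_restr (S j) x y H), (agree_restr j x y (agree_le (S j) j x y ltac:(lia) H)).
    reflexivity. }
  assert (Hsearch : forall f k, search_switch j x k f = search_switch j y k f).
  { induction f as [|f IH]; intro k; simpl; [reflexivity|].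
    destruct excluded_middle_informative as [Hx|Hx], excluded_middle_informative as [Hy|Hy];
      try reflexivity; [exfalso; apply Hy, Hsw, Hx| exfalso; apply Hx, Hsw, Hy| apply IH]. }
  apply Hsearch.
Qed.

End Switches.

Close Scope nat_scope.

(** * The reduction *)

(* η_k bounds the deficits allowed while k is being signalled, ε_j is the
   deficit reached at the end of stage j. *)
Definition eta (k : nat) : R := / (16 * (INR k + 1)).
Definition eps_at (j : nat) : R := eta j / 2.

Lemma eta_pos k : 0 < eta k.
Proof. unfold eta. apply Rinv_0_lt_compat. pose proof (pos_INR k). lra. Qed.

Lemma eta_le k : eta k <= 1/16.
Proof.
  unfold eta. pose proof (pos_INR k). unfold Rdiv. rewrite Rmult_1_l.
  apply Rinv_le_contravar; lra.
Qed.

Lemma eta_anti k k' : (k <= k')%nat -> eta k' <= eta k.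
Proof.
  intro H. unfold eta. apply le_INR in H. pose proof (pos_INR k).
  apply Rinv_le_contravar; lra.
Qed.

Lemma eta_small eps : 0 < eps -> exists K, 4 * eta K < eps.
Proof.
  intro Heps. destruct (inv_succ_small (eps / 4)) as [K HK]; [lra|]. exists K.
  unfold eta. rewrite Rinv_mult. pose proof (pos_INR K).
  assert (0 < / (INR K + 1)) by (apply Rinv_0_lt_compat; lra). lra.
Qed.

Lemma eps_at_pos j : 0 < eps_at j.
Proof. unfold eps_at. pose proof (eta_pos j). lra. Qed.

Section Reduction.
Variable A : CSet.
Variable F : nat -> nat -> CSet.
Variable t0 : list bool.

(* Chosen witnesses for the dip and climb lemmas (with harmless defaults). *)
Definition dip_choice (e : R) (t : list bool) : list bool :=
  match excluded_middle_informative
          (exists r, bounded_path A t r (2 * e) /\ e <= 1 - dens A (t ++ r)) with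
  | left H => proj1_sig (constructive_indefinite_description _ H)
  | right _ => []
  end.

Lemma dip_choice_spec e t : (exists r, bounded_path A t r (2 * e) /\ e <= 1 - dens A (t ++ r)) ->
  bounded_path A t (dip_choice e t) (2 * e) /\ e <= 1 - dens A (t ++ dip_choice e t).
Proof.
  intro H. unfold dip_choice. destruct excluded_middle_informative as [H'|H']; [|contradiction].
  destruct (constructive_indefinite_description _ H'). simpl. exact a.
Qed.

Definition climb_choice (theta e : R) (u : list bool) : list bool :=
  match excluded_middle_informative
          (exists r, r <> [] /\ bounded_path A u r theta /\ 1 - dens A (u ++ r) < e) with
  | left H => proj1_sig (constructive_indefinite_description _ H)
  | right _ => [false]
  end.

Lemma climb_choice_spec theta e u :
  (exists r, r <> [] /\ bounded_path A u r theta /\ 1 - dens A (u ++ r) < e) ->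
  bounded_path A u (climb_choice theta e u) theta /\ 1 - dens A (u ++ climb_choice theta e u) < e.
Proof.
  intro H. unfold climb_choice. destruct excluded_middle_informative as [H'|H']; [|contradiction].
  destruct (constructive_indefinite_description _ H'). simpl. tauto.
Qed.

Lemma climb_choice_nonempty theta e u : climb_choice theta e u <> [].
Proof.
  unfold climb_choice. destruct excluded_middle_informative as [H'|H']; [|discriminate].
  destruct (constructive_indefinite_description _ H'). simpl. tauto.
Qed.

(* Stage j signals the least switching k (if any) by a dip to deficit η_k,
   then climbs to deficit < ε_(j+1); stage_bound bounds all deficits met. *)
Definition stage_bound (j : nat) (o : option nat) : R :=
  match o with None => 4 * eps_at j | Some k => 4 * eta k end.

Definition dip_part (o : option nat) (t : list bool) : list bool :=
  match o with None => t | Some k => t ++ dip_choice (eta k) t end.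

Definition next_stage (j : nat) (o : option nat) (t : list bool) : list bool :=
  dip_part o t ++ climb_choice (stage_bound j o) (eps_at (S j)) (dip_part o t).

Lemma next_stage_extends j o t : exists r, next_stage j o t = t ++ r /\ r <> [].
Proof.
  unfold next_stage. destruct o as [k|]; simpl.
  - eexists. split; [rewrite <- app_assoc; reflexivity|]. intro H. apply app_eq_nil in H.
    destruct H as [_ H]. apply (climb_choice_nonempty _ _ _ H).
  - eexists. split; [reflexivity| apply climb_choice_nonempty].
Qed.

Section Invariant.
Hypothesis HA : measurable A.
Hypothesis HE : empty_interior (Phi A).

Lemma dip_part_spec j o t : 1 - dens A t < eps_at j -> (forall k, o = Some k -> (k <= j)%nat) ->
  (exists r, dip_part o t = t ++ r /\ bounded_path A t r (stage_bound j o)) /\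
  1 - dens A (dip_part o t) < stage_bound j o /\
  (forall k, o = Some k -> eta k <= 1 - dens A (dip_part o t)).
Proof.
  intros Ht Ho. pose proof (eps_at_pos j). destruct o as [k|]; simpl.
  - specialize (Ho k eq_refl). pose proof (eta_pos k). pose proof (eta_le k).
    pose proof (eta_anti k j Ho). unfold eps_at in *.
    destruct (dip_choice_spec (eta k) t) as [Hd1 Hd2]; [apply dip_extension; auto; lra|].
    pose proof (bounded_path_end _ _ _ _ Hd1).
    split; [|split; [lra|intros k' Hk'; injection Hk' as <-; exact Hd2]].
    eexists. split; [reflexivity|]. eapply bounded_path_mono; [|exact Hd1]. lra.
  - split; [|split; [lra|discriminate]].
    exists []. rewrite app_nil_r. split; [reflexivity|].
    intros k Hk. replace k with 0%nat by (simpl in Hk; lia). simpl. rewrite app_nil_r. lra.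
Qed.

Lemma next_stage_spec j o t : 1 - dens A t < eps_at j -> (forall k, o = Some k -> (k <= j)%nat) ->
  1 - dens A (next_stage j o t) < eps_at (S j) /\
  (exists r, next_stage j o t = t ++ r /\ bounded_path A t r (stage_bound j o)) /\
  (forall k, o = Some k ->
     exists u, prefix t u /\ prefix u (next_stage j o t) /\ eta k <= 1 - dens A u).
Proof.
  intros Ht Ho. destruct (dip_part_spec j o t Ht Ho) as [[r1 [Hr1 Hp1]] [Hlow Hsig]].
  assert (Hbound : stage_bound j o <= 1).
  { destruct o as [k|]; simpl; [pose proof (eta_le k)| pose proof (eta_le j); unfold eps_at]; lra. }
  destruct (climb_choice_spec (stage_bound j o) (eps_at (S j)) (dip_part o t)) as [Hc1 Hc2].
  { apply climb_extension; [apply eps_at_pos| exact Hbound| exact Hlow]. }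
  unfold next_stage. split; [exact Hc2|]. split.
  - rewrite Hr1 in *. eexists. split; [rewrite <- app_assoc; reflexivity|].
    apply bounded_path_app; assumption.
  - intros k Hk. exists (dip_part o t). split; [rewrite Hr1; apply prefix_app|].
    split; [apply prefix_app| apply Hsig, Hk].
Qed.

End Invariant.

(* The stages along x; stage x (j+1) only depends on x|(j+1). *)
Fixpoint stage (x : Cantor) (j : nat) : list bool :=
  match j with
  | O => t0
  | S j' => next_stage j' (least_switch F j' x) (stage x j')
  end.

Definition reduction (x : Cantor) : Cantor := chain_limit (stage x).

Lemma stage_prefix x j : prefix (stage x j) (stage x (S j)).
Proof.
  simpl. destruct (next_stage_extends j (least_switch F j x) (stage x j)) as [r [-> _]].
  apply prefix_app.
Qed.

Lemma stage_length_grows x j : (length (stage x j) + 1 <= length (stage x (S j)))%nat.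
Proof.
  simpl. destruct (next_stage_extends j (least_switch F j x) (stage x j)) as [r [-> Hr]].
  rewrite length_app. destruct r; [contradiction|simpl; lia].
Qed.

Lemma stage_length_ge x j : (j <= length (stage x j))%nat.
Proof. induction j; [lia|]. pose proof (stage_length_grows x j). lia. Qed.

Lemma stage_length_mono x j j' : (j <= j')%nat -> (length (stage x j) <= length (stage x j'))%nat.
Proof. intro H. induction H as [|mm H IH]; [lia|]. pose proof (stage_length_grows x mm). lia. Qed.

Lemma reduction_cyl x j : cyl (stage x j) (reduction x).
Proof. apply chain_limit_cyl; [apply stage_prefix| apply stage_length_ge]. Qed.

Lemma stage_local x y j : agree j x y -> stage x j = stage y j.
Proof.
  induction j; intro H; [reflexivity|]. simpl.
  rewrite (IHj (agree_le (S j) j x y ltac:(lia) H)), (least_switch_local F j x y H). reflexivity.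
Qed.

(* Bit i of the reduction is read off stage i+1, which depends on x|(i+1). *)
Lemma reduction_continuous : continuous reduction.
Proof.
  intros x n. exists n. intros y Hy i Hi. unfold reduction, chain_limit.
  rewrite (stage_local x y (S i)); [reflexivity|]. apply (agree_le n); [lia|exact Hy].
Qed.

Lemma stage_containing x J n : (length (stage x J) <= n)%nat ->
  exists j, (J <= j)%nat /\ (length (stage x j) <= n)%nat /\ (n < length (stage x (S j)))%nat.
Proof.
  intro H. destruct (least_nat (fun j => (n < length (stage x j))%nat)) as [j1 [Hj1 Hj2]].
  { exists (S n). pose proof (stage_length_ge x (S n)). lia. }
  destruct j1 as [|j]; [pose proof (stage_length_mono x 0 J ltac:(lia)); lia|].
  exists j. assert (Hn : ~ (n < length (stage x j))%nat) by (apply Hj2; lia).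
  split; [|split; [lia|exact Hj1]].
  apply Nat.nlt_ge. intro Hlt. pose proof (stage_length_mono x (S j) J ltac:(lia)). lia.
Qed.

Section Correctness.
Hypothesis HA : measurable A.
Hypothesis HE : empty_interior (Phi A).
Hypothesis Ht0 : 1 - dens A t0 < eps_at 0.

Lemma stage_invariant x j : 1 - dens A (stage x j) < eps_at j.
Proof.
  induction j; [exact Ht0|]. simpl. apply next_stage_spec; try assumption.
  intros k Hk. apply (least_switch_some F j x k Hk).
Qed.

Lemma stage_step x j :
  (exists r, stage x (S j) = stage x j ++ r /\
             bounded_path A (stage x j) r (stage_bound j (least_switch F j x))) /\
  (forall k, least_switch F j x = Some k ->
     exists u, prefix (stage x j) u /\ prefix u (stage x (S j)) /\ eta k <= 1 - dens A u).
Proof.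
  apply next_stage_spec; try assumption; [apply stage_invariant|].
  intros k Hk. apply (least_switch_some F j x k Hk).
Qed.

Lemma deficit_within_stage x j n : (length (stage x j) <= n <= length (stage x (S j)))%nat ->
  1 - dens A (restr (reduction x) n) <= stage_bound j (least_switch F j x).
Proof.
  intro Hn. destruct (stage_step x j) as [[r [Hr Hpath]] _].
  pose proof (reduction_cyl x (S j)) as Hc. rewrite Hr in Hc. rewrite Hr, length_app in Hn.
  pose proof (restr_in_segment (reduction x) (stage x j) r (n - length (stage x j)) Hc
                ltac:(lia)) as E.
  replace (length (stage x j) + (n - length (stage x j)))%nat with n in E by lia.
  rewrite E. apply Hpath. lia.
Qed.

Hypothesis Hclosed : forall k n, is_closed (F k n).

Lemma eventually_no_small_switch x : (forall k, exists n, F k n x) ->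
  forall K, exists J, forall j, (J <= j)%nat -> forall k, (k <= K)%nat -> ~ switches F k j x.
Proof.
  intros Hall K. induction K as [|K [J1 HJ1]].
  - destruct (proj1 (union_iff_finitely_many_switches F 0 x (Hclosed 0%nat)) (Hall 0%nat))
      as [J HJ].
    exists J. intros j Hj k Hk. replace k with 0%nat by lia. apply HJ, Hj.
  - destruct (proj1 (union_iff_finitely_many_switches F (S K) x (Hclosed (S K))) (Hall (S K)))
      as [J2 HJ2].
    exists (Nat.max J1 J2). intros j Hj k Hk.
    destruct (Nat.eq_dec k (S K)) as [->|]; [apply HJ2; lia| apply HJ1; lia].
Qed.

(* If x ∈ ⋂_k ⋃_n F k n then reduction x ∈ Φ(A): past the last switch of
   every k ≤ K, all deficits are ≤ 4 η_K. *)
Lemma reduction_in_Phi x : (forall k, exists n, F k n x) -> Phi A (reduction x).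
Proof.
  intro Hall. apply Phi_char. intros eps Heps.
  destruct (eta_small eps Heps) as [K HK].
  destruct (eventually_no_small_switch x Hall K) as [J0 HJ0].
  exists (length (stage x (Nat.max J0 K))). intros n Hn.
  destruct (stage_containing x (Nat.max J0 K) n Hn) as [j [Hj1 [Hj2 Hj3]]].
  pose proof (deficit_within_stage x j n ltac:(lia)) as Hd.
  assert (Hbound : stage_bound j (least_switch F j x) <= 4 * eta K).
  { destruct (least_switch F j x) as [k'|] eqn:Hm; simpl.
    - destruct (least_switch_some F j x k' Hm) as [_ [Hf _]].
      assert (HK' : (K <= k')%nat)
        by (apply Nat.nlt_ge; intro Hlt; exact (HJ0 j ltac:(lia) k' ltac:(lia) Hf)).
      pose proof (eta_anti K k' HK'). lra.
    - unfold eps_at. pose proof (eta_anti K j ltac:(lia)). pose proof (eta_pos j). lra. }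
  rewrite dist_one_deficit. lra.
Qed.

(* Conversely, reduction x ∈ Φ(A) implies x ∈ ⋂_k ⋃_n F k n: if k switched
   infinitely often, the reduction would pass through strings of deficit
   ≥ η_k arbitrarily late. *)
Lemma Phi_reduction_in x : Phi A (reduction x) -> forall k, exists n, F k n x.
Proof.
  intros HP k. apply (union_iff_finitely_many_switches F k x (Hclosed k)). apply NNPP. intro Hno.
  apply Phi_char in HP. destruct (HP (eta k) (eta_pos k)) as [N HN].
  assert (Hinf : forall J, exists j, (J <= j)%nat /\ switches F k j x).
  { intro J. apply NNPP. intro Hn. apply Hno. exists J. intros j Hj Hf.
    apply Hn. exists j. split; assumption. }
  destruct (Hinf (Nat.max N k)) as [j [Hj Hf]].
  destruct (least_switch F j x) as [k'|] eqn:Hm;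
    [|exact (least_switch_none F j x Hm k ltac:(lia) Hf)].
  destruct (least_switch_some F j x k' Hm) as [_ [_ Hmin]].
  assert (Hk' : (k' <= k)%nat) by (apply Nat.nlt_ge; intro Hlt; exact (Hmin k Hlt Hf)).
  destruct (proj2 (stage_step x j) k' Hm) as [u [Hu1 [Hu2 Hu3]]].
  assert (Hcu : cyl u (reduction x)) by (eapply cyl_prefix; [exact Hu2| apply reduction_cyl]).
  apply cyl_restr in Hcu.
  assert (Hlu : (N <= length u)%nat).
  { pose proof (prefix_length _ _ Hu1). pose proof (stage_length_ge x j). lia. }
  specialize (HN (length u) Hlu). rewrite Hcu, dist_one_deficit in HN.
  pose proof (eta_anti k' k Hk'). lra.
Qed.

End Correctness.
End Reduction.

Theorem theorem1p3 (A : CSet) :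
  measurable A ->
  (exists x, Phi A x) ->
  empty_interior (Phi A) ->
  complete_Pi03 (Phi A).
Proof.
  intros HA [x0 Hx0] HE. split; [apply Phi_Pi03|].
  intros Y [G [HG HY]].
  (* Write Y = ⋂_k ⋃_n F k n with F k n closed. *)
  apply choice in HG. destruct HG as [F HF].
  (* Start the construction at a restriction of x0 ∈ Φ(A) of deficit < ε_0. *)
  apply Phi_char in Hx0. destruct (Hx0 (eps_at 0) (eps_at_pos 0)) as [N HN].
  specialize (HN N (le_n N)) as Ht0. rewrite dist_one_deficit in Ht0.
  exists (reduction A F (restr x0 N)). split; [apply reduction_continuous|].
  assert (Hclosed : forall k n, is_closed (F k n)) by (intro k; apply (proj1 (HF k))).
  intro x. rewrite HY. split.
  - intro HxY. apply (reduction_in_Phi A F _ HA HE Ht0 Hclosed).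
    intro k. apply (proj2 (HF k)), HxY.
  - intros HP k. apply (proj2 (HF k)). exact (Phi_reduction_in A F _ HA HE Ht0 Hclosed x HP k).
Qed.
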